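(* Let $X$ be a random variable taking values in a set $\mathcal{X}$ and $Y \in [0,1]$ a target outcome. Let $\mathcal{F}$ be a class of functions $\mathcal{X} \to [0,1]$, $\alpha \ge 0$, and let $S_1, \dots, S_K$ be an $\alpha$-multicalibrated partition with respect to $\mathcal{F}$ and $Y$. Then for all $f \in \mathcal{F}$ and $k \in [K]$, $$\mathbb{E}_k\left[(Y - \mathbb{E}_k[Y])^2\right] \le \mathbb{E}_k\left[(Y - f(X))^2\right] + 2\alpha.$$
   Context: $\mathbb{E}_k$ denotes expectation conditional on $\{X \in S_k\}$ (assumed to have positive probability). A set $S \subseteq \mathcal{X}$ is $\alpha$-indistinguishable with respect to $\mathcal{F}$ and $Y$ if $|\mathrm{Cov}(f(X), Y \mid X \in S)| \le \alpha$ for all $f \in \mathcal{F}$. Sets $S_1, \dots, S_K$ form an $\alpha$-multicalibrated partition with respect to $\mathcal{F}$ and $Y$ if they partition $\mathcal{X}$ and each $S_k$ is $\alpha$-indistinguishable with respect to $\mathcal{F}$ and $Y$. *)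

From HB Require Import structures.
From mathcomp Require Import all_boot all_order all_algebra.
From mathcomp Require Import all_classical all_reals all_analysis.
Set Implicit Arguments. Unset Strict Implicit. Unset Printing Implicit Defensive.
Import Order.TTheory GRing.Theory Num.Theory.
Import numFieldNormedType.Exports.
Local Open Scope classical_set_scope.
Local Open Scope ring_scope.

Definition condE (d : measure_display) (T : measurableType d) (R : realType)
  (P : probability T R) (A : set T) (Z : T -> R) : R :=
  Rintegral P A Z / fine (P A).

Definition condCov (d : measure_display) (T : measurableType d) (R : realType)
  (P : probability T R) (A : set T) (Z W : T -> R) : R :=
  condE P A (fun w => Z w * W w) - condE P A Z * condE P A W.

Definition indistinguishable (d : measure_display) (T : measurableType d)
  (d' : measure_display) (Xt : measurableType d') (R : realType)
  (P : probability T R) (X : T -> Xt) (Y : T -> R)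
  (F : set (Xt -> R)) (alpha : R) (S : set Xt) : Prop :=
  forall f, F f -> `| condCov P (X @^-1` S) (f \o X) Y | <= alpha.

Definition multicalibrated_partition (d : measure_display) (T : measurableType d)
  (d' : measure_display) (Xt : measurableType d') (R : realType)
  (P : probability T R) (X : T -> Xt) (Y : T -> R)
  (F : set (Xt -> R)) (alpha : R) (K : nat) (S : 'I_K -> set Xt) : Prop :=
  [/\ (forall k, measurable (S k)),
      (forall i j, i != j -> S i `&` S j = set0),
      (\bigcup_(k in [set: 'I_K]) S k = setT) &
      (forall k, indistinguishable P X Y F alpha (S k))].

From HB Require Import structures.
From mathcomp Require Import all_boot all_order all_algebra.
From mathcomp Require Import all_classical all_reals all_analysis.
From mathcomp Require Import measurable_realfun ring lra.
Import Order.TTheory GRing.Theory Num.Theory.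
Local Open Scope classical_set_scope.
Local Open Scope ring_scope.

Set Implicit Arguments.
Unset Strict Implicit.
Unset Printing Implicit Defensive.

(* With m := E_k[Y] and g := f(X), expanding the square around m gives
   E_k[(Y - g)^2] = E_k[(Y - m)^2] + E_k[(g - m)^2] - 2 Cov_k(g, Y),
   because E_k[(g - m)(Y - m)] = Cov_k(g, Y).  The middle term is
   nonnegative and indistinguishability bounds |Cov_k(g, Y)| by alpha. *)

Section bounded_measurable.
Context (d : measure_display) (T : measurableType d) (R : realType).
Implicit Types Z W : T -> R.

Definition bounded_measurable Z :=
  measurable_fun setT Z /\ exists M : R, forall x, `|Z x| <= M.

Lemma bounded_measurableD Z W : bounded_measurable Z -> bounded_measurable W ->
  bounded_measurable (fun x => Z x + W x).
Proof.
move=> [mZ [M hM]] [mW [N hN]]; split; first exact: measurable_funD.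
by exists (M + N) => x; rewrite (le_trans (ler_normD _ _))// lerD.
Qed.

Lemma bounded_measurableM Z W : bounded_measurable Z -> bounded_measurable W ->
  bounded_measurable (fun x => Z x * W x).
Proof.
move=> [mZ [M hM]] [mW [N hN]]; split; first exact: measurable_funM.
by exists (M * N) => x; rewrite normrM ler_pM.
Qed.

Lemma bounded_measurable01 Z : measurable_fun setT Z ->
  (forall x, 0 <= Z x <= 1) -> bounded_measurable Z.
Proof.
move=> mZ Z01; split=> //; exists 1 => x.
by have /andP[Z_ge0 Z_le1] := Z01 x; rewrite ger0_norm.
Qed.

Lemma bounded_measurable_cst (c : R) : bounded_measurable (fun=> c).
Proof. by split; [exact: measurable_cst | exists `|c|]. Qed.

Lemma bounded_measurableX n Z : bounded_measurable Z ->
  bounded_measurable (fun x => Z x ^+ n).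
Proof.
move=> bZ; elim: n => [|n bZn]; first exact: bounded_measurable_cst.
by under eq_fun do rewrite exprS; exact: bounded_measurableM.
Qed.

Lemma bounded_measurable_integrable (mu : {finite_measure set T -> \bar R})
    Z A : measurable A -> bounded_measurable Z -> mu.-integrable A (EFin \o Z).
Proof.
move=> mA [mZ [M hM]]; apply: measurable_bounded_integrable => //.
- by rewrite -ge0_fin_numE ?fin_num_measure.
- exact: measurable_funS mZ.
- rewrite /bounded_near; near=> N => x _ /=; apply: le_trans (hM x) _; near: N.
  exact: nbhs_pinfty_ge (num_real M).
Unshelve. all: by end_near. Qed.

End bounded_measurable.

Section conditional_expectation.
Context (d : measure_display) (T : measurableType d) (R : realType)
  (P : probability T R) (A : set T).
Hypotheses (mA : measurable A) (PA_gt0 : (0 < P A)%E).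
Implicit Types Z W : T -> R.

Local Hint Resolve bounded_measurableD bounded_measurableM
  bounded_measurableX bounded_measurable_cst : core.

Let fine_PA_gt0 : 0 < fine (P A).
Proof. by rewrite fine_gt0// PA_gt0 (le_lt_trans (probability_le1 P mA)) ?ltry. Qed.

Lemma condED Z W : bounded_measurable Z -> bounded_measurable W ->
  condE P A (fun w => Z w + W w) = condE P A Z + condE P A W.
Proof.
by move=> bZ bW; rewrite /condE RintegralD ?mulrDl//;
  exact: bounded_measurable_integrable.
Qed.

Lemma condEZl (c : R) Z : bounded_measurable Z ->
  condE P A (fun w => c * Z w) = c * condE P A Z.
Proof.
by move=> bZ; rewrite /condE RintegralZl ?mulrA//;
  exact: bounded_measurable_integrable.
Qed.

Lemma condE_cst (c : R) : condE P A (fun=> c) = c.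
Proof. by rewrite /condE Rintegral_cst// mulfK// gt_eqF. Qed.

Lemma condE_ge0 Z : (forall w, 0 <= Z w) -> 0 <= condE P A Z.
Proof. by move=> Z_ge0; rewrite divr_ge0 ?Rintegral_ge0 ?ltW. Qed.

Lemma condCov_centered (c : R) Z W :
  bounded_measurable Z -> bounded_measurable W ->
  condCov P A Z W = condE P A (fun w => (Z w - c) * (W w - condE P A W)).
Proof.
move=> bZ bW; set m := condE P A W.
have -> : (fun w => (Z w - c) * (W w - m)) =
    (fun w => Z w * W w + ((- m) * Z w + ((- c) * W w + c * m))).
  by apply/funext => w; ring.
rewrite !condED ?condE_cst ?condEZl; auto.
by rewrite /condCov -/m; ring.
Qed.

Lemma condE_sqr_sub Y g : bounded_measurable Y -> bounded_measurable g ->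
  condE P A (fun w => (Y w - g w) ^+ 2) =
  condE P A (fun w => (Y w - condE P A Y) ^+ 2)
  + condE P A (fun w => (g w - condE P A Y) ^+ 2) - 2 * condCov P A g Y.
Proof.
move=> bY bg.
have -> : (fun w => (Y w - g w) ^+ 2) = (fun w => (Y w - condE P A Y) ^+ 2 +
    ((g w - condE P A Y) ^+ 2
     + (-2) * ((g w - condE P A Y) * (Y w - condE P A Y)))).
  by apply/funext => w; ring.
rewrite (condCov_centered (condE P A Y) bg bY) !condED ?condEZl; auto.
by ring.
Qed.

End conditional_expectation.

Theorem lemma1 (d : measure_display) (T : measurableType d)
  (d' : measure_display) (Xt : measurableType d') (R : realType)
  (P : probability T R) (X : T -> Xt) (Y : T -> R)
  (F : set (Xt -> R)) (alpha : R) (K : nat) (S : 'I_K -> set Xt) :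
  measurable_fun setT X ->
  measurable_fun setT Y ->
  (forall w, 0 <= Y w <= 1) ->
  (forall f, F f -> measurable_fun setT f /\ forall x, 0 <= f x <= 1) ->
  0 <= alpha ->
  multicalibrated_partition P X Y F alpha S ->
  (forall k, (0 < P (X @^-1` S k))%E) ->
  forall f k, F f ->
    condE P (X @^-1` S k) (fun w => (Y w - condE P (X @^-1` S k) Y) ^+ 2)
    <= condE P (X @^-1` S k) (fun w => (Y w - f (X w)) ^+ 2) + 2 * alpha.
Proof.
move=> mX mY Y01 F01 _ [mS _ _ indist] PS_gt0 f k Ff.
have [mf f01] := F01 f Ff.
have mA : measurable (X @^-1` S k) by rewrite -[_ @^-1` _]setTI; exact: mX.
have bY := bounded_measurable01 mY Y01.
have bfX := bounded_measurable01 (measurableT_comp mf mX) (fun w => f01 (X w)).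
rewrite (condE_sqr_sub mA (PS_gt0 k) bY bfX).
have := condE_ge0 mA (PS_gt0 k)
  (fun w => sqr_ge0 (f (X w) - condE P (X @^-1` S k) Y)).
have := indist k f Ff; rewrite ler_norml => /andP[].
lra.
Qed.
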